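(* Let $\gamma\in(0,2/f_{\max})$. The map $\mathcal Z:\mathbb S_c^{N\times N}\to\mathbb S_c^{N\times N}$, $\mathcal Z(\tilde h)=\mathcal Q\big(\gamma(\tilde X_R+j\tilde X_I)+\tilde h-\gamma(\mathcal F(\tilde h_R)+j\mathcal F(\tilde h_I)-\tfrac{1+j}{2})\big)$, is a contraction on the set of complex matrices in $\mathbb S_c^{N\times N}$ with respect to the Frobenius distance.
   Context: $M,N$ positive integers with $N>2M$; $g$ is a real $M\times M$ image with values in $[0,255]$ zero-padded to $N\times N$, $\tilde g=\tilde g_R+j\tilde g_I$ its $N\times N$ 2D-DFT $\mathfrak F(g)$; $\tilde X_R=\mathbb 1(\tilde g_R+W_R+d_R>0)-\tfrac12$, $\tilde X_I=\mathbb 1(\tilde g_I+W_I+d_I>0)-\tfrac12$ entrywise, where $W_R,W_I$ are independent zero-mean noise of known distribution symmetric about $0$ and $d_R,d_I$ independent AWGN dither, ensuring the total noise density is positive on the signal range. $\mathcal F$ is the CDF and $f$ the PDF of the total noise, applied entrywise; $f_{\max}$ is the maximum of $f$ over the region within the bounds of the signal. $\tilde h_R,\tilde h_I$ are the real and imaginary parts of $\tilde h$. $\mathbb S_c=\{a+jb:a,b\in[-255N^2,255N^2]\}$. $\mathcal Q(\tilde h)=\mathfrak F(\textsc{Clip}(\textsc{Proj}(\mathfrak F^{-1}(\tilde h))))$, where $\textsc{Proj}$ zeroes spatial-domain pixels outside the $M^2$-pixel image block and $\textsc{Clip}$ clips pixel values to $[0,255]$. *)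

From HB Require Import structures.
From mathcomp Require Import all_boot all_order all_algebra.
From mathcomp Require Import all_classical all_reals all_analysis.
From mathcomp Require Import complex.
Set Implicit Arguments. Unset Strict Implicit. Unset Printing Implicit Defensive.
Import Order.TTheory GRing.Theory Num.Theory.
Local Open Scope ring_scope.

Section OneBitDefs.
Context {R : realType}.
Local Notation C := R[i].
Local Notation Re := (@complex.Re _).
Local Notation Im := (@complex.Im _).

(* W ~ mu (a probability distribution on R, symmetric about 0, zero mean),
   d ~ N(0, sigma^2) independent AWGN dither.  The total noise W + d has
   density  f(x) = \int mu(dw) phi_sigma(x - w)  and CDF F(x) = \int_{-oo}^x f. *)
Definition symmetric_distribution (mu : probability R R) : Prop :=
  forall A : set R, measurable A -> mu ((fun x => - x) @` A)%classic = mu A.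

Definition zero_mean (mu : probability R R) : Prop :=
  mu.-integrable setT (fun x => x%:E) /\ (\int[mu]_x x%:E = 0)%E.

Definition noise_pdf (mu : probability R R) (sigma : R) (x : R) : R :=
  fine (\int[mu]_w (normal_pdf 0 sigma (x - w))%:E)%E.

Definition noise_cdf (mu : probability R R) (sigma : R) (x : R) : R :=
  fine (\int[lebesgue_measure]_(t in `]-oo, x]%classic) (noise_pdf mu sigma t)%:E)%E.

Definition sig_bound (N : nat) : R := 255 * (N%:R ^+ 2).

Definition f_max (mu : probability R R) (sigma : R) (N : nat) : R :=
  sup [set noise_pdf mu sigma x | x in `[- sig_bound N, sig_bound N]%classic].

Definition twiddle (N t : nat) : C :=
  Complex (cos (2 * pi * t%:R / N%:R)) (- sin (2 * pi * t%:R / N%:R)).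

Definition dft2 (N : nat) (x : 'M[C]_N) : 'M[C]_N :=
  \matrix_(k, l) \sum_(m < N) \sum_(n < N) x m n * twiddle N (k * m + l * n).

Definition idft2 (N : nat) (X : 'M[C]_N) : 'M[C]_N :=
  \matrix_(m, n) ((N%:R ^+ 2)^-1 *
     \sum_(k < N) \sum_(l < N) X k l * conjc (twiddle N (k * m + l * n))).

Definition proj_blk (M N : nat) (x : 'M[C]_N) : 'M[C]_N :=
  \matrix_(m, n) (if (m < M)%N && (n < M)%N then x m n else 0).

(* clip pixel values to [0,255] (the image is real: projection onto
   real pixels in [0,255]) *)
Definition clip255 (r : R) : R := Num.min (Num.max r 0) 255.

Definition clip_img (N : nat) (x : 'M[C]_N) : 'M[C]_N :=
  \matrix_(m, n) Complex (clip255 (Re (x m n))) 0.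

Definition Qop (M N : nat) (h : 'M[C]_N) : 'M[C]_N :=
  dft2 (clip_img (proj_blk M (idft2 h))).

Definition zero_pad (M N : nat) (g : 'M[R]_M) : 'M[C]_N :=
  \matrix_(m, n)
    match (insub (val m) : option 'I_M), (insub (val n) : option 'I_M) with
    | Some i, Some j => Complex (g i j) 0
    | _, _ => 0
    end.

Definition gtilde (M N : nat) (g : 'M[R]_M) : 'M[C]_N := dft2 (zero_pad N g).

Definition ind_half (b : bool) : R := (if b then 1 else 0) - 2^-1.

Definition Xtilde (M N : nat) (g : 'M[R]_M) (WR WI dR dI : 'M[R]_N) : 'M[C]_N :=
  \matrix_(k, l)
    Complex (ind_half (0 < Re (gtilde N g k l) + WR k l + dR k l))
            (ind_half (0 < Im (gtilde N g k l) + WI k l + dI k l)).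

Definition Zop (M N : nat) (F : R -> R) (gamma : R) (X : 'M[C]_N)
    (h : 'M[C]_N) : 'M[C]_N :=
  Qop M
    (\matrix_(k, l)
       Complex (gamma * Re (X k l) + Re (h k l) - gamma * (F (Re (h k l)) - 2^-1))
               (gamma * Im (X k l) + Im (h k l) - gamma * (F (Im (h k l)) - 2^-1))).

Definition in_Sc (N : nat) (h : 'M[C]_N) : Prop :=
  forall k l, `|Re (h k l)| <= sig_bound N /\ `|Im (h k l)| <= sig_bound N.

Definition frob_dist (N : nat) (h1 h2 : 'M[C]_N) : R :=
  Num.sqrt (\sum_(k < N) \sum_(l < N)
              ((Re (h1 k l - h2 k l)) ^+ 2 + (Im (h1 k l - h2 k l)) ^+ 2)).

End OneBitDefs.

(* Z is Q composed with the entrywise gradient step x |-> x + gamma (X - F x + 1/2),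
   applied separately to real and imaginary parts.  On the signal range
   [-255 N^2, 255 N^2] the noise density lies between some c > 0 (the Gaussian
   dither spreads all of the noise mass) and f_max, so F has slopes in [c, f_max]
   and each scalar step is Lipschitz with constant max (1 - gamma c, gamma f_max - 1),
   which is < 1 exactly because 0 < gamma < 2 / f_max.  Q is nonexpansive for the
   Frobenius distance: by Parseval the DFT multiplies it by N and the inverse DFT by
   1/N, while block projection and clipping are nonexpansive entrywise.  Finally Q
   lands in S_c, since the DFT of an N x N image with pixels in [0, 255] has real
   and imaginary parts bounded by 255 N^2. *)

From HB Require Import structures.
From mathcomp Require Import all_boot all_order all_algebra.
From mathcomp Require Import all_classical all_reals all_analysis.
From mathcomp Require Import complex measurable_realfun.
From mathcomp Require Import ring lra zify.
Import Order.TTheory GRing.Theory Num.Theory.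
Local Open Scope ring_scope.

Section cdf_of_density.
Local Open Scope classical_set_scope.
Context {R : realType} (p : R -> R).
Hypotheses (measurable_p : measurable_fun setT p) (p_ge0 : forall x, 0 <= p x)
  (integral_p_fin : (\int[lebesgue_measure]_x (p x)%:E < +oo)%E).

Definition cdf_of_density (x : R) : R :=
  fine (\int[lebesgue_measure]_(t in `]-oo, x]) (p t)%:E)%E.

Let measurable_EFin_p (D : set R) : measurable_fun D (EFin \o p).
Proof. by apply/measurable_EFinP; exact: measurable_funTS. Qed.

Let integral_p_fin_num (D : set R) : measurable D ->
  (\int[lebesgue_measure]_(t in D) (p t)%:E)%E \is a fin_num.
Proof.
move=> mD; rewrite ge0_fin_numE; last by apply: integral_ge0 => x _; rewrite lee_fin.
apply: le_lt_trans integral_p_fin; apply: ge0_subset_integral => //.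
  exact: measurable_EFin_p.
by move=> x _; rewrite lee_fin.
Qed.

Lemma cdf_of_densityB b a : b <= a ->
  cdf_of_density a - cdf_of_density b =
  fine (\int[lebesgue_measure]_(t in `]b, a]) (p t)%:E)%E.
Proof.
move=> ba.
have itvU : `]-oo, a] = `]-oo, b] `|` `]b, a] :> set R.
  by rewrite (@itv_bndbnd_setU _ _ -oo%O (BRight b) (BRight a)) // bnd_simp.
have itvI : [disjoint (`]-oo, b] : set R) & `]b, a]].
  apply/disj_setPS => x /= []; rewrite /= !in_itv /= => xb /andP[bx _].
  by move: (lt_le_trans bx xb); rewrite ltxx.
rewrite /cdf_of_density itvU ge0_integral_setU //; last 2 first.
- by rewrite -itvU; exact: measurable_EFin_p.
- by move=> x _; rewrite lee_fin.
by rewrite fineD ?integral_p_fin_num // addrAC subrr add0r.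
Qed.

Lemma cdf_of_density_increment_bounds lo hi b a : b <= a -> 0 <= lo ->
  (forall t, b < t <= a -> lo <= p t <= hi) ->
  lo * (a - b) <= cdf_of_density a - cdf_of_density b <= hi * (a - b).
Proof.
move=> ba lo_ge0 p_bnd; rewrite cdf_of_densityB //.
have itv_len : lebesgue_measure (`]b, a] : set R) = (a - b)%:E.
  rewrite lebesgue_measure_itv /= lte_fin; have [_|ab] := ltP b a; first by rewrite EFinB.
  have -> : a = b by apply/eqP; rewrite eq_le ab ba.
  by rewrite subrr.
have mba := measurable_itv `]b, a]%R.
rewrite -!lee_fin fineK ?integral_p_fin_num // !EFinM -itv_len -!integral_cst //.
apply/andP; split; apply: ge0_le_integral => //; do ?exact: measurable_EFin_p.
- by move=> x /=; rewrite in_itv /= => /p_bnd /andP[+ _]; rewrite lee_fin.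
- by move=> x _; rewrite lee_fin.
- by move=> x /=; rewrite in_itv /= => /p_bnd /andP[_ +]; rewrite lee_fin.
Qed.

End cdf_of_density.

Section gaussian_facts.
Context {R : realType}.

Lemma normal_pdf_gt0 (m s x : R) : s != 0 -> 0 < normal_pdf m s x.
Proof.
move=> s0; rewrite /normal_pdf (negbTE s0) mulr_gt0 ?normal_peak_gt0 //.
exact: expR_gt0.
Qed.

Lemma normal_pdf0_le_norm (s x D : R) : s != 0 -> `|x| <= D ->
  normal_pdf 0 s D <= normal_pdf 0 s x.
Proof.
move=> s0 xD; rewrite /normal_pdf (negbTE s0) ler_wpM2l ?normal_peak_ge0 //.
rewrite /normal_fun ler_expR !subr0 !mulNr lerN2 ler_wpM2r ?invr_ge0 ?mulrn_wge0 ?sqr_ge0 //.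
by rewrite -[x ^+ 2]real_normK ?num_real // lerXn2r ?nnegrE // (le_trans _ xD).
Qed.

Lemma probability_centered_itv_gt0 (mu : probability R R) :
  exists n : nat, (0 < mu `[(- n%:R)%R, n%:R%R]%classic)%E.
Proof.
apply: contrapT => /forallNP mu_itv0.
have cover : ([set: R] `<=` \bigcup_n `[- n%:R, n%:R])%classic.
  move=> x _; exists (Num.truncn `|x|).+1 => //=.
  by rewrite in_itv /= -ler_norml; exact/ltW/truncnS_gt.
have := measure_sigma_subadditive mu (fun n => measurable_itv _) measurableT cover.
set muT := (X in (X <= _)%E); have -> : muT = 1%E by exact: probability_setT.
rewrite eseries0; last first.
  by move=> n _ _; apply/eqP; rewrite eq_le measure_ge0 andbT leNgt; apply/negP/mu_itv0.
by rewrite lee_fin ler10.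
Qed.

End gaussian_facts.

Section noise_density.
Local Open Scope classical_set_scope.
Context {R : realType} (mu : probability R R) (sigma : R).
Hypothesis sigma_gt0 : 0 < sigma.
Local Notation phi := (normal_pdf 0 sigma).
Local Notation pdf := (noise_pdf mu sigma).

Let sigma_neq0 : sigma != 0. Proof. exact: lt0r_neq0. Qed.

Let measurable_phi_diff :
  measurable_fun setT (fun q : measurableTypeR R * R => (phi (q.1 - q.2))%:E).
Proof.
apply/measurable_EFinP; apply: measurableT_comp; first exact: measurable_normal_pdf.
exact: measurable_funB.
Qed.

Let measurable_phi_shift t : measurable_fun setT (fun w : R => (phi (t - w))%:E).
Proof.
apply/measurable_EFinP; apply: measurableT_comp; first exact: measurable_normal_pdf.
exact: measurable_funB.
Qed.

Let integral_mu_cst (r : R) : (\int[mu]_w (cst r%:E w) = r%:E)%E.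
Proof.
rewrite integral_cst //; set muT := (X in (_ * X)%E).
have -> : muT = 1%E by exact: probability_setT.
by rewrite mule1.
Qed.

Let mixture_bounds t :
  (0 <= \int[mu]_w (phi (t - w))%:E <= (normal_peak sigma)%:E)%E.
Proof.
rewrite integral_ge0 /=; last by move=> w _; rewrite lee_fin normal_pdf_ge0.
apply: (@le_trans _ _ (\int[mu]_w (cst (normal_peak sigma)%:E w))%E).
  apply: ge0_le_integral => //; first by move=> w _; rewrite lee_fin normal_pdf_ge0.
  by move=> w _; rewrite lee_fin normal_pdf_ub.
by rewrite integral_mu_cst.
Qed.

Lemma noise_pdfE t : (pdf t)%:E = (\int[mu]_w (phi (t - w))%:E)%E.
Proof.
have /andP[ge0 le_peak] := mixture_bounds t.
by rewrite /noise_pdf fineK // ge0_fin_numE // (le_lt_trans le_peak) ?ltry.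
Qed.

Lemma noise_pdf_ge0 t : 0 <= pdf t.
Proof. by have /andP[+ _] := mixture_bounds t; rewrite -lee_fin noise_pdfE. Qed.

Lemma noise_pdf_le_peak t : pdf t <= normal_peak sigma.
Proof. by have /andP[_ +] := mixture_bounds t; rewrite -lee_fin noise_pdfE. Qed.

Lemma measurable_noise_pdf : measurable_fun setT pdf.
Proof.
apply/measurable_EFinP.
have -> : EFin \o pdf = fubini_F mu (fun q : R * R => (phi (q.1 - q.2))%:E).
  by apply/funext => t /=; rewrite noise_pdfE.
apply: measurable_fun_fubini_tonelli_F => // q.
by rewrite lee_fin normal_pdf_ge0.
Qed.

(* Tonelli: integrating out t first leaves the total mass of a translated Gaussian. *)
Lemma integral_noise_pdf : (\int[lebesgue_measure]_t (pdf t)%:E = 1)%E.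
Proof.
under eq_integral do rewrite noise_pdfE.
rewrite (fubini_tonelli (fun q : measurableTypeR R * R => (phi (q.1 - q.2))%:E)) //=;
  last by move=> q; rewrite lee_fin normal_pdf_ge0.
transitivity (\int[mu]_w (cst 1%:E w))%E; last exact: integral_mu_cst.
apply: eq_integral => w _; rewrite -(integral_normal_pdf w sigma).
by apply: eq_integral => t _; rewrite /normal_pdf (negbTE sigma_neq0) /normal_fun subr0.
Qed.

Lemma noise_pdf_bounded_below B :
  exists2 c, 0 < c & forall t, -B <= t <= B -> c <= pdf t.
Proof.
have [n mu_n_gt0] := probability_centered_itv_gt0 mu.
set I := `[- n%:R, n%:R] : set R.
have mI : measurable I by exact: measurable_itv.
have mu_I_fin : mu I \is a fin_num.
  by rewrite fin_num_measure // (le_lt_trans _ (ltry 1)) //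
    -(probability_setT mu) le_measure ?inE.
(* On I the Gaussian kernel is at least its value at distance B + n. *)
exists (phi (B + n%:R) * fine (mu I)).
  by rewrite mulr_gt0 ?normal_pdf_gt0 // -lte_fin fineK.
move=> t /andP[Bt tB]; rewrite -lee_fin noise_pdfE EFinM fineK //.
apply: (@le_trans _ _ (\int[mu]_(w in I) (phi (t - w))%:E)%E); last first.
  apply: ge0_subset_integral => //; first by move=> w _; rewrite lee_fin normal_pdf_ge0.
rewrite -integral_cst //; apply: ge0_le_integral => //.
- by move=> w _; rewrite lee_fin normal_pdf_ge0.
- exact: measurable_funTS.
- move=> w; rewrite /I /= in_itv /= => /andP[nw wn]; rewrite lee_fin.
  by apply: normal_pdf0_le_norm; rewrite // ler_norml; apply/andP; split; lra.
Qed.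

Lemma noise_pdf_le_f_max N t :
  - sig_bound N <= t <= sig_bound N -> pdf t <= f_max mu sigma N.
Proof.
move=> t_in; apply: ub_le_sup; last by exists t => //=; rewrite in_itv.
by exists (normal_peak sigma) => _ [x _ <-]; exact: noise_pdf_le_peak.
Qed.

Lemma noise_cdf_increment_bounds lo hi B a b : 0 <= lo ->
  (forall t, -B <= t <= B -> lo <= pdf t <= hi) ->
  -B <= b -> b <= a -> a <= B ->
  lo * (a - b) <= noise_cdf mu sigma a - noise_cdf mu sigma b <= hi * (a - b).
Proof.
move=> lo_ge0 pdf_bnd Bb ba aB.
have pdf_fin : (\int[lebesgue_measure]_t (pdf t)%:E < +oo)%E.
  by rewrite integral_noise_pdf ltry.
apply: (cdf_of_density_increment_bounds pdf measurable_noise_pdf noise_pdf_ge0 pdf_fin) => //.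
move=> t /andP[bt ta]; apply: pdf_bnd; apply/andP; split.
  exact: le_trans Bb (ltW bt).
exact: le_trans ta aB.
Qed.

End noise_density.

Lemma sqr_le_of_normr_le (R : realDomainType) (x y : R) : `|x| <= y -> x ^+ 2 <= y ^+ 2.
Proof.
move=> xy; rewrite -real_normK ?num_real //.
by apply: lerXn2r; rewrite ?nnegrE ?(le_trans _ xy).
Qed.

Section gradient_step.
Context {R : realFieldType}.
Implicit Types gamma c fm : R.

Definition step_rate gamma c fm : R := Num.max (1 - gamma * c) (gamma * fm - 1).

Lemma step_rate_ge0 gamma c fm : 0 < gamma -> c <= fm -> 0 <= step_rate gamma c fm.
Proof.
move=> gamma_gt0 c_le_fm; rewrite le_max !subr_ge0.
have [//|/ltW gc_ge1] := leP (gamma * c) 1.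
by rewrite (le_trans gc_ge1) // ler_wpM2l // ltW.
Qed.

Lemma step_rate_lt1 gamma c fm : 0 < gamma -> 0 < c -> gamma * fm < 2 ->
  step_rate gamma c fm < 1.
Proof.
by move=> gamma_gt0 c_gt0 gfm_lt2; rewrite gt_max !ltrBlDr ltrDl mulr_gt0.
Qed.

(* A slope of F in [c, fm] puts the slope of x - gamma F x in [1 - gamma fm, 1 - gamma c]. *)
Lemma gradient_step_lipschitz (F : R -> R) gamma c fm B : 0 < gamma ->
    (forall a b, -B <= b -> b <= a -> a <= B ->
       c * (a - b) <= F a - F b <= fm * (a - b)) ->
  forall a b, -B <= a <= B -> -B <= b <= B ->
    `|(a - b) - gamma * (F a - F b)| <= step_rate gamma c fm * `|a - b|.
Proof.
move=> gamma_gt0 F_slopes a b.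
wlog ba : a b / b <= a.
  move=> sym a_in b_in; have [ba|/ltW ab] := leP b a; first exact: sym.
  rewrite -normrN -(normrN (a - b)).
  have -> : - (a - b - gamma * (F a - F b)) = b - a - gamma * (F b - F a) by ring.
  by rewrite opprB; exact: sym.
move=> /andP[_ aB] /andP[Bb _].
have /andP[lo hi] := F_slopes a b Bb ba aB.
have d_ge0 : 0 <= a - b by rewrite subr_ge0.
rewrite (ger0_norm d_ge0) ler_norml.
set d := a - b in lo hi d_ge0 *; set D := F a - F b in lo hi *.
have rate1 : (1 - gamma * c) * d <= step_rate gamma c fm * d.
  by rewrite ler_wpM2r // le_max lexx.
have rate2 : (gamma * fm - 1) * d <= step_rate gamma c fm * d.
  by rewrite ler_wpM2r // le_max lexx orbT.
have glo : gamma * (c * d) <= gamma * D by rewrite ler_wpM2l // ltW.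
have ghi : gamma * D <= gamma * (fm * d) by rewrite ler_wpM2l // ltW.
apply/andP; split; nra.
Qed.

End gradient_step.

Lemma unity_root_sum_eq0 (F : idomainType) (w : F) n :
  w ^+ n = 1 -> w != 1 -> \sum_(i < n) w ^+ i = 0.
Proof.
move=> wn1 w_neq1; have /esym/eqP := subrX1 w n.
by rewrite wn1 subrr mulf_eq0 subr_eq0 (negbTE w_neq1) => /eqP.
Qed.

Section squared_modulus.
Local Open Scope complex_scope.
Context {R : realType}.

Definition sqmodc (z : R[i]) : R := complex.Re z ^+ 2 + complex.Im z ^+ 2.

Lemma sqmodc0 : sqmodc 0 = 0.
Proof. by rewrite /sqmodc /= expr0n addr0. Qed.

Lemma sqmodc_ge0 z : 0 <= sqmodc z.
Proof. by rewrite addr_ge0 ?sqr_ge0. Qed.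

Lemma mulcJ_sqmodc z : z * conjc z = (sqmodc z)%:C.
Proof.
by case: z => a b; apply/eqP; rewrite eq_complex /sqmodc /=; apply/andP; split; apply/eqP; ring.
Qed.

Lemma sqmodcZ (a : R) z : sqmodc (a%:C * z) = a ^+ 2 * sqmodc z.
Proof. by case: z => x y; rewrite /sqmodc /=; ring. Qed.

Lemma parseval_orthogonal {I J : finType} (K : I -> J -> R[i]) (c : R) (x : J -> R[i]) :
    (forall j j', \sum_i K i j * conjc (K i j') = if j == j' then c%:C else 0) ->
  \sum_i sqmodc (\sum_j x j * K i j) = c * \sum_j sqmodc (x j).
Proof.
move=> K_orth; apply: (@complexI R).
rewrite rmorph_sum rmorphM rmorph_sum /=.
under eq_bigr do rewrite -mulcJ_sqmodc rmorph_sum mulr_suml.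
under eq_bigr do under eq_bigr do rewrite mulr_sumr.
transitivity (\sum_j \sum_j' x j * conjc (x j') * \sum_i K i j * conjc (K i j')).
  rewrite exchange_big /=; apply: eq_bigr => j _.
  rewrite exchange_big /=; apply: eq_bigr => j' _.
  by rewrite mulr_sumr; apply: eq_bigr => i _; rewrite rmorphM; ring.
rewrite mulr_sumr; apply: eq_bigr => j _.
under eq_bigr do rewrite K_orth.
rewrite (bigD1 j) //= eqxx big1 ?addr0; last first.
  by move=> j' /negbTE; rewrite eq_sym => ->; rewrite mulr0.
by rewrite mulcJ_sqmodc mulrC.
Qed.

Definition frob2 {N} (A : 'M[R[i]]_N) : R := \sum_k \sum_l sqmodc (A k l).

Lemma frob2_pair N (A : 'M[R[i]]_N) :
  frob2 A = \sum_(q : 'I_N * 'I_N) sqmodc (A q.1 q.2).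
Proof. by rewrite /frob2 pair_bigA. Qed.

Lemma frob_distE N (h1 h2 : 'M[R[i]]_N) : frob_dist h1 h2 = Num.sqrt (frob2 (h1 - h2)).
Proof.
rewrite /frob_dist /frob2; congr Num.sqrt.
by apply: eq_bigr => k _; apply: eq_bigr => l _; rewrite /sqmodc !mxE.
Qed.

End squared_modulus.

Section twiddle.
Local Open Scope complex_scope.
Context {R : realType} (N : nat).
Hypothesis N_gt0 : (0 < N)%N.
Local Notation tw := (@twiddle R N).

Lemma twiddle0 : tw 0 = 1.
Proof. by rewrite /twiddle mulr0 mul0r cos0 sin0 oppr0. Qed.

Lemma twiddleD a b : tw (a + b) = tw a * tw b.
Proof. by rewrite /twiddle natrD mulrDr mulrDl cosD sinD /=; congr Complex; ring. Qed.

Lemma twiddleM a n : tw (a * n) = tw a ^+ n.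
Proof.
elim: n => [|n IHn]; first by rewrite muln0 twiddle0 expr0.
by rewrite mulnS twiddleD IHn exprS.
Qed.

Lemma twiddle_period : tw N = 1.
Proof.
rewrite /twiddle mulfK ?pnatr_eq0 -?lt0n // mulr_natl.
by rewrite cos2pi sin2pi oppr0.
Qed.

Lemma twiddle_modn j : tw j = tw (j %% N).
Proof.
by rewrite {1}(divn_eq j N) twiddleD mulnC twiddleM twiddle_period expr1n mul1r.
Qed.

Lemma twiddle_neq1 r : (0 < r < N)%N -> tw r != 1.
Proof.
move=> /andP[r_gt0 r_ltN]; apply/negP => /eqP /(congr1 (@complex.Re R)) /= cos_eq1.
pose y : R := pi * r%:R / N%:R.
have y_gt0 : 0 < y by rewrite /y mulr_gt0 ?invr_gt0 ?mulr_gt0 ?ltr0n ?pi_gt0.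
have y_ltpi : y < pi.
  by rewrite /y -mulrA gtr_pMr ?pi_gt0 // ltr_pdivrMr ?ltr0n // mul1r ltr_nat.
have sin_y_gt0 : 0 < sin y by apply: sin_gt0_pi; rewrite y_gt0 y_ltpi.
have : cos (y *+ 2) = 1 by rewrite -cos_eq1 /y mulr_natr mulr2n; congr cos; ring.
rewrite cos_mulr2n cos2sin2; nra.
Qed.

Lemma mul_conjc_twiddle t : conjc (tw t) * tw t = 1.
Proof.
rewrite /twiddle /=; set x := 2 * pi * t%:R / N%:R.
move: (cos x) (sin x) (cos2Dsin2 x) => c s cs1.
apply/eqP; rewrite eq_complex /=; apply/andP; split; apply/eqP; last by ring.
by rewrite -[RHS]cs1; ring.
Qed.

Lemma conjc_twiddleM b m : (b <= N)%N -> conjc (tw (b * m)) = tw ((N - b) * m).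
Proof.
move=> b_leN; have inv_tw : tw ((N - b) * m) * tw (b * m) = 1.
  by rewrite -twiddleD -mulnDl subnK // twiddleM twiddle_period expr1n.
by rewrite -[LHS]mulr1 -inv_tw mulrCA mul_conjc_twiddle mulr1.
Qed.

Lemma twiddle_orthogonal (a b : 'I_N) :
  \sum_(m < N) tw (a * m) * conjc (tw (b * m)) = if a == b then N%:R else 0.
Proof.
have b_leN : (b <= N)%N by exact: ltnW.
under eq_bigr do rewrite conjc_twiddleM // -twiddleD -mulnDl twiddleM.
have [->|a_neq_b] := eqVneq a b.
  rewrite subnKC // twiddle_period.
  by under eq_bigr do rewrite expr1n; rewrite sumr_const card_ord.
apply: unity_root_sum_eq0; first by rewrite -twiddleM mulnC twiddleM twiddle_period expr1n.
rewrite twiddle_modn; apply: twiddle_neq1; rewrite ltn_mod N_gt0 andbT lt0n.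
apply: contra a_neq_b => /dvdnP[q q_eq]; apply/eqP/val_inj => /=.
have a_lt := ltn_ord a; have b_lt := ltn_ord b.
have q_eq1 : q = 1%N by nia.
by rewrite q_eq1 mul1n in q_eq; lia.
Qed.

Lemma twiddle2_orthogonal (q q' : 'I_N * 'I_N) :
  \sum_(p : 'I_N * 'I_N) tw (p.1 * q.1 + p.2 * q.2) * conjc (tw (p.1 * q'.1 + p.2 * q'.2))
  = if q == q' then N%:R ^+ 2 else 0.
Proof.
rewrite -(pair_bigA _ (fun k l : 'I_N =>
  tw (k * q.1 + l * q.2) * conjc (tw (k * q'.1 + l * q'.2)))).
transitivity ((\sum_(k < N) tw (q.1 * k) * conjc (tw (q'.1 * k))) *
              (\sum_(l < N) tw (q.2 * l) * conjc (tw (q'.2 * l)))).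
  rewrite mulr_suml; apply: eq_bigr => k _; rewrite mulr_sumr; apply: eq_bigr => l _.
  by rewrite !twiddleD rmorphM ![(_ * k)%N]mulnC ![(_ * l)%N]mulnC mulrACA.
rewrite !twiddle_orthogonal; case: q q' => [a b] [c d] /=.
by rewrite xpair_eqE; case: eqP => _; case: eqP => _; rewrite ?mulr0 ?mul0r.
Qed.

End twiddle.

Section dft2_energy.
Local Open Scope complex_scope.
Context {R : realType} {N : nat}.
Implicit Types x y : 'M[R[i]]_N.

Lemma dft2B x y : dft2 (x - y) = dft2 x - dft2 y.
Proof.
apply/matrixP => k l; rewrite !mxE -sumrB; apply: eq_bigr => m _.
by rewrite -sumrB; apply: eq_bigr => n _; rewrite !mxE mulrBl.
Qed.

Lemma idft2B x y : idft2 (x - y) = idft2 x - idft2 y.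
Proof.
apply/matrixP => k l; rewrite !mxE -mulrBr -sumrB; congr (_ * _); apply: eq_bigr => m _.
by rewrite -sumrB; apply: eq_bigr => n _; rewrite !mxE mulrBl.
Qed.

Hypothesis N_gt0 : (0 < N)%N.

Lemma frob2_dft2 x : frob2 (dft2 x) = N%:R ^+ 2 * frob2 x.
Proof.
rewrite !frob2_pair; under eq_bigr do rewrite mxE pair_bigA.
apply: (parseval_orthogonal (fun q p : 'I_N * 'I_N => twiddle N (q.1 * p.1 + q.2 * p.2))
  _ (fun p => x p.1 p.2)) => p p'.
by rewrite twiddle2_orthogonal // rmorphXn rmorph_nat.
Qed.

Lemma frob2_idft2 x : frob2 (idft2 x) = (N%:R ^+ 2)^-1 * frob2 x.
Proof.
have N2_neq0 : (N%:R ^+ 2 : R) != 0 by rewrite expf_neq0 // pnatr_eq0 -lt0n.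
rewrite !frob2_pair; under eq_bigr do rewrite mxE.
have -> : (N%:R ^+ 2)^-1 = ((N%:R ^+ 2)^-1 : R)%:C :> R[i].
  by rewrite fmorphV rmorphXn rmorph_nat.
under eq_bigr do rewrite sqmodcZ pair_bigA.
rewrite -mulr_sumr (parseval_orthogonal
  (fun q p : 'I_N * 'I_N => conjc (twiddle N (p.1 * q.1 + p.2 * q.2))) (N%:R ^+ 2)).
  by set a := N%:R ^+ 2; rewrite expr2 -mulrA mulKf.
move=> p p'; under eq_bigr do rewrite conjcK mulrC ![(p.1 * _)%N]mulnC ![(p.2 * _)%N]mulnC
  ![(p'.1 * _)%N]mulnC ![(p'.2 * _)%N]mulnC.
by rewrite twiddle2_orthogonal // eq_sym rmorphXn rmorph_nat.
Qed.

End dft2_energy.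

Section reconstruction_operator.
Local Open Scope complex_scope.
Context {R : realType}.

Lemma clip255E (a : R) :
  clip255 a = if a < 0 then 0 else if a < 255 then a else 255.
Proof.
rewrite /clip255 /Num.max /Num.min; have [a_lt0|//] := ltP a 0.
by rewrite ltr0n.
Qed.

Lemma clip255_range (a : R) : 0 <= clip255 a <= 255.
Proof. by rewrite clip255E; have [a0|a0] := ltP a 0; last have [a1|a1] := ltP a 255; lra. Qed.

Lemma clip255_lipschitz (a b : R) : `|clip255 a - clip255 b| <= `|a - b|.
Proof.
wlog ba : a b / b <= a.
  move=> sym; have [/sym //|/ltW /sym] := leP b a.
  by rewrite distrC (distrC a).
rewrite (ger0_norm (x := a - b)) ?subr_ge0 // ler_norml !clip255E.
have [a0|a0] := ltP a 0; last have [a1|a1] := ltP a 255;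
  (have [b0|b0] := ltP b 0; last have [b1|b1] := ltP b 255); lra.
Qed.

Context {M N : nat}.
Implicit Types x y : 'M[R[i]]_N.

Lemma frob2_clip_imgB x y : frob2 (clip_img x - clip_img y) <= frob2 (x - y).
Proof.
apply: ler_sum => k _; apply: ler_sum => l _.
rewrite !mxE /sqmodc !raddfB /= subrr expr0n addr0.
apply: le_trans (_ : _ <= `|complex.Re (x k l) - complex.Re (y k l)| ^+ 2) _.
  exact/sqr_le_of_normr_le/clip255_lipschitz.
by rewrite real_normK ?num_real // lerDl sqr_ge0.
Qed.

Lemma frob2_proj_blkB x y : frob2 (proj_blk M x - proj_blk M y) <= frob2 (x - y).
Proof.
apply: ler_sum => k _; apply: ler_sum => l _.
by rewrite !mxE; case: ifP => _; rewrite // subrr sqmodc0 sqmodc_ge0.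
Qed.

Lemma frob2_QopB (N_gt0 : (0 < N)%N) x y :
  frob2 (Qop M x - Qop M y) <= frob2 (x - y).
Proof.
have N2_gt0 : (0 : R) < N%:R ^+ 2 by rewrite exprn_gt0 // ltr0n.
rewrite /Qop -dft2B frob2_dft2 // -ler_pdivlMl // -frob2_idft2 // idft2B.
exact: le_trans (frob2_clip_imgB _ _) (frob2_proj_blkB _ _).
Qed.

Lemma in_Sc_dft2_clip_img x : in_Sc (dft2 (clip_img x)).
Proof.
have clip_norm (a : R) : `|clip255 a| <= 255.
  by have /andP[a_ge0 a_le] := clip255_range a; rewrite ger0_norm.
have sig_boundE : sig_bound N = \sum_(m < N) \sum_(n < N) (255 : R).
  by rewrite /sig_bound !sumr_const card_ord -mulrnA -[_ *+ (N * N)]mulr_natr natrM expr2.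
move=> k l; rewrite mxE !raddf_sum sig_boundE; split;
  apply: (le_trans (ler_norm_sum _ _ _)); apply: ler_sum => m _;
  rewrite raddf_sum; apply: (le_trans (ler_norm_sum _ _ _)); apply: ler_sum => n _;
  rewrite !mxE /= mul0r ?subr0 ?addr0 normrM ?normrN -[255]mulr1;
  apply: ler_pM => //; [exact: cos_max | exact: sin_max].
Qed.

End reconstruction_operator.

Section gradient_step_matrix.
Local Open Scope complex_scope.
Context {R : realType} {N : nat}.
Local Notation Re := (@complex.Re R).
Local Notation Im := (@complex.Im R).

Definition grad_step (F : R -> R) (gamma : R) (X h : 'M[R[i]]_N) : 'M[R[i]]_N :=
  \matrix_(k, l)
    Complex (gamma * Re (X k l) + Re (h k l) - gamma * (F (Re (h k l)) - 2^-1))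
            (gamma * Im (X k l) + Im (h k l) - gamma * (F (Im (h k l)) - 2^-1)).

Lemma Zop_grad_step M F gamma X (h : 'M[R[i]]_N) :
  Zop M F gamma X h = Qop M (grad_step F gamma X h).
Proof. by []. Qed.

Lemma frob2_grad_stepB (F : R -> R) (gamma L : R) (X h1 h2 : 'M[R[i]]_N) :
    (forall a b, - sig_bound N <= a <= sig_bound N -> - sig_bound N <= b <= sig_bound N ->
       `|(a - b) - gamma * (F a - F b)| <= L * `|a - b|) ->
    in_Sc h1 -> in_Sc h2 ->
  frob2 (grad_step F gamma X h1 - grad_step F gamma X h2) <= L ^+ 2 * frob2 (h1 - h2).
Proof.
move=> step_lip h1_in h2_in.
have entry_le a b : - sig_bound N <= a <= sig_bound N -> - sig_bound N <= b <= sig_bound N ->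
    ((a - b) - gamma * (F a - F b)) ^+ 2 <= L ^+ 2 * (a - b) ^+ 2.
  move=> a_in b_in; rewrite -(real_normK (num_real (a - b))) -exprMn.
  exact/sqr_le_of_normr_le/step_lip.
have grad_stepB_entry k l : (grad_step F gamma X h1 - grad_step F gamma X h2) k l =
    Complex (Re (h1 k l) - Re (h2 k l) - gamma * (F (Re (h1 k l)) - F (Re (h2 k l))))
            (Im (h1 k l) - Im (h2 k l) - gamma * (F (Im (h1 k l)) - F (Im (h2 k l)))).
  by rewrite !mxE; apply/eqP; rewrite eq_complex /=; apply/andP; split; apply/eqP; ring.
rewrite /frob2 mulr_sumr; apply: ler_sum => k _; rewrite mulr_sumr; apply: ler_sum => l _.
have [+ +] := h1_in k l; have [+ +] := h2_in k l; rewrite !ler_norml => re2 im2 re1 im1.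
rewrite grad_stepB_entry !mxE /sqmodc !raddfB /= [X in _ <= X]mulrDr.
by apply: lerD; exact: entry_le.
Qed.

End gradient_step_matrix.

Theorem lemma5 (R : realType) (M N : nat) (hM : (0 < M)%N) (hMN : (2 * M < N)%N)
    (g : 'M[R]_M) (hg : forall i j, 0 <= g i j <= 255)
    (mu : probability R R) (hsym : symmetric_distribution mu) (hmean : zero_mean mu)
    (sigma : R) (hsigma : 0 < sigma)
    (WR WI dR dI : 'M[R]_N)
    (gamma : R) (hgamma0 : 0 < gamma) (hgamma1 : gamma < 2 / f_max mu sigma N) :
  let Z := Zop M (noise_cdf mu sigma) gamma (Xtilde g WR WI dR dI) in
  (forall h, in_Sc h -> in_Sc (Z h)) /\
  exists L : R, 0 <= L < 1 /\
    forall h1 h2, in_Sc h1 -> in_Sc h2 ->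
      frob_dist (Z h1) (Z h2) <= L * frob_dist h1 h2.
Proof.
move=> Z; split => [h _|]; first exact: in_Sc_dft2_clip_img.
have N_gt0 : (0 < N)%N by lia.
pose B := sig_bound N : R; pose fm := f_max mu sigma N.
have [c c_gt0 c_le_pdf] := noise_pdf_bounded_below mu sigma hsigma B.
have pdf_bnd t : -B <= t <= B -> c <= noise_pdf mu sigma t <= fm.
  by move=> t_in; rewrite c_le_pdf ?(noise_pdf_le_f_max mu sigma hsigma).
have zero_in : -B <= 0 <= B by rewrite oppr_le0 andbb mulr_ge0 ?sqr_ge0.
have c_le_fm : c <= fm by have /andP[] := pdf_bnd 0 zero_in; exact: le_trans.
have gamma_fm_lt2 : gamma * fm < 2 by rewrite -ltr_pdivlMr ?(lt_le_trans c_gt0).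
have c_ge0 := ltW c_gt0.
have F_slopes a b : -B <= b -> b <= a -> a <= B ->
    c * (a - b) <= noise_cdf mu sigma a - noise_cdf mu sigma b <= fm * (a - b).
  exact: noise_cdf_increment_bounds.
have rate_ge0 : 0 <= step_rate gamma c fm by exact: step_rate_ge0.
exists (step_rate gamma c fm); rewrite rate_ge0 step_rate_lt1 //.
split => // h1 h2 h1_in h2_in.
rewrite !frob_distE -(ger0_norm rate_ge0) -sqrtr_sqr -sqrtrM ?sqr_ge0 // ler_wsqrtr //.
rewrite /Z !Zop_grad_step.
apply: le_trans (frob2_QopB N_gt0 _ _) _; apply: frob2_grad_stepB => //.
exact: gradient_step_lipschitz.
Qed.
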